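(* Let $\mathbb{S}=(S,\Sigma,\{\tau_a\mid a\in L\})$ be an LMP, let $\Sigma_0\subseteq\Sigma$ be a sub-$\sigma$-algebra with $\mathcal{R}(\Sigma_0)=\mathcal{R}^T(\Sigma_0)$, and put $R_0=\mathcal{R}(\Sigma_0)$. If $\lambda$ is a limit ordinal and $\Sigma(\mathcal{R}(\Sigma_\lambda))=\Sigma_\lambda$, then $\mathcal{R}(\Sigma_\lambda)$ is a state bisimulation.
   Context: An LMP is a triple $(S,\Sigma,\{\tau_a\mid a\in L\})$ with $(S,\Sigma)$ a measurable space, $L$ countable, and each $\tau_a:S\times\Sigma\to[0,1]$ a Markov kernel (subprobability measure in the second argument, measurable in the first). For $R\subseteq S\times S$, $A$ is $R$-closed if $x\in A$, $xRs$ imply $s\in A$; $\Sigma(R)$ is the family of $R$-closed members of $\Sigma$. For $\Gamma\subseteq\mathcal{P}(S)$, $\mathcal{R}(\Gamma)=\{(s,t):\forall A\in\Gamma\,(s\in A\iff t\in A)\}$; for $\Lambda\subseteq\Sigma$, $\mathcal{R}^T(\Lambda)=\{(s,t):\forall a\in L\,\forall E\in\Lambda\ \tau_a(s,E)=\tau_a(t,E)\}$. $\mathcal{O}(R)=\mathcal{R}^T(\Sigma(R))$, $\mathcal{G}(\Lambda)=\Sigma(\mathcal{R}^T(\Lambda))$. Iterates: $R_{\alpha+1}=\mathcal{O}(R_\alpha)$, $R_\lambda=\bigcap_{\alpha<\lambda}R_\alpha$ for limit $\lambda$; $\Sigma_{\alpha+1}=\mathcal{G}(\Sigma_\alpha)$,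 $\Sigma_\lambda=\sigma(\bigcup_{\alpha<\lambda}\Sigma_\alpha)$ for limit $\lambda$. A state bisimulation is a symmetric relation $R$ on $S$ such that whenever $sRt$ and $C\in\Sigma(R)$, $\tau_a(s,C)=\tau_a(t,C)$ for all $a\in L$. *)

From HB Require Import structures.
From mathcomp Require Import all_boot all_order all_algebra.
From mathcomp Require Import all_classical all_reals all_analysis.
Set Implicit Arguments. Unset Strict Implicit. Unset Printing Implicit Defensive.
Import Order.TTheory GRing.Theory Num.Theory.
Local Open Scope classical_set_scope.
Local Open Scope ring_scope.

Section LMP.
Context (d : measure_display) (S : measurableType d) (R : realType) (L : countType).
(* An LMP: labels L (countable), one subprobability Markov kernel per label. *)
Variable tau : L -> R.-spker S ~> S.

Definition rclosed (Rel : S -> S -> Prop) (A : set S) :=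
  forall x s, A x -> Rel x s -> A s.

Definition SigmaR (Rel : S -> S -> Prop) : set (set S) :=
  [set A | measurable A /\ rclosed Rel A].

Definition RelOf (Gam : set (set S)) : S -> S -> Prop :=
  fun s t => forall A, Gam A -> (A s <-> A t).

Definition RelT (Lam : set (set S)) : S -> S -> Prop :=
  fun s t => forall (a : L) E, Lam E -> tau a s E = tau a t E.

Definition Oop (Rel : S -> S -> Prop) := RelT (SigmaR Rel).
Definition Gop (Lam : set (set S)) := SigmaR (RelT Lam).

Definition state_bisimulation (Rel : S -> S -> Prop) :=
  (forall s t, Rel s t -> Rel t s) /\
  (forall s t, Rel s t -> forall C, SigmaR Rel C -> forall a : L, tau a s C = tau a t C).
End LMP.

(* Ordinals are represented by a well-ordered index type (I, lt): every
   ordinal lambda is the top of the well-order of ordinals <= lambda. *)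
Section WellOrder.
Context (I : Type) (lt : I -> I -> Prop).
Definition is_wellorder :=
  (forall i, ~ lt i i) /\
  (forall i j k, lt i j -> lt j k -> lt i k) /\
  (forall i j, lt i j \/ i = j \/ lt j i) /\
  well_founded lt.
Definition is_zero (i : I) := forall j, ~ lt j i.
Definition is_succ_of (j i : I) := lt j i /\ forall k, lt j k -> k = i \/ lt i k.
Definition is_limit (i : I) := ~ is_zero i /\ ~ (exists j, is_succ_of j i).
End WellOrder.

Definition sigma_iterates d (S : measurableType d) (R : realType) (L : countType)
    (tau : L -> R.-spker S ~> S) (Sigma0 : set (set S))
    (I : Type) (lt : I -> I -> Prop) (F : I -> set (set S)) :=
  (forall i, is_zero lt i -> F i = Sigma0) /\
  (forall j i, is_succ_of lt j i -> F i = Gop tau (F j)) /\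
  (forall i, is_limit lt i ->
     F i = <<s \bigcup_(j in [set j | lt j i]) F j >>).

(* Call a family Lam of measurable sets "adequate" when it contains S, is
   closed under intersection (a pi-system), and R^T(Lam) is included in R(Lam).
   The proof has three parts.
   1. Facts about the operators: R(G(Lam)) = R^T(Lam) for measurable Lam,
      R(G) is contained in R(sigma(G)), and G preserves adequacy; hence by well-founded
      induction every Sigma_alpha is adequate and the sequence is increasing.
   2. Facts about ordinals: below a limit every alpha has its successor below
      the limit, so the union U of the Sigma_alpha (alpha < lambda) is a
      pi-system and R(Sigma_lambda) is contained in every R^T(Sigma_alpha).
   3. If s R(Sigma_lambda) t, the finite measures tau_a(s,-), tau_a(t,-) thus
      agree on the pi-system U, hence on Sigma_lambda = sigma(U) by Dynkin's
      uniqueness theorem; the fixed-point hypothesis identifies the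
      R(Sigma_lambda)-closed measurable sets with Sigma_lambda. *)
From HB Require Import structures.
From mathcomp Require Import all_boot all_order all_algebra.
From mathcomp Require Import all_classical all_reals all_analysis.
From Stdlib Require Import Classical.
Set Implicit Arguments.
Unset Strict Implicit.
Local Open Scope classical_set_scope.
Local Open Scope ring_scope.

Lemma finite_measure_unique d (T : measurableType d) (R : realType)
    (G : set (set T)) (m1 m2 : {measure set T -> \bar R}) :
  G `<=` measurable -> setI_closed G ->
  m1 setT = m2 setT -> (m1 setT < +oo)%E ->
  (forall A, G A -> m1 A = m2 A) ->
  forall X, <<s G >> X -> m1 X = m2 X.
Proof.
move=> Gm GI m1m2T m1T m1m2 X GX.
have traceG : [set X | G X /\ X `<=` setT] = G.
  by apply/seteqP; split=> [A []//|A GA]; split.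
by apply: (@g_sigma_algebra_measure_unique_trace _ R T G setT measurableT);
  rewrite ?traceG.
Qed.

Lemma RelOf_sigma d (S : measurableType d) (G : set (set S)) (s t : S) :
  RelOf G s t -> RelOf <<s G >> s t.
Proof.
move=> hst; apply: (@smallest_sub _ _ _ [set A | A s <-> A t]) => //=.
split=> //= [A [h1 h2]|U hU].
- by split=> -[_ nA]; split=> // hA; apply: nA; [exact: h2|exact: h1].
- by split=> -[n _ Un]; exists n => //; apply hU.
Qed.

Lemma RelOf_antitone d (S : measurableType d) {G G' : set (set S)} {s t : S} :
  G `<=` G' -> RelOf G' s t -> RelOf G s t.
Proof. by move=> GG' hst A /GG'; exact: hst. Qed.

Section LMPOperators.
Context (d : measure_display) (S : measurableType d) (R : realType)
  (L : countType) (tau : L -> R.-spker S ~> S).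

Lemma RelT_antitone {Lam Lam' : set (set S)} {s t : S} :
  Lam `<=` Lam' -> RelT tau Lam' s t -> RelT tau Lam s t.
Proof. by move=> LL' hst a E /LL'; exact: hst. Qed.

Lemma level_set_Gop {Lam : set (set S)} {E : set S} (a : L) (c : \bar R) :
  measurable E -> Lam E -> Gop tau Lam [set x | tau a x E = c].
Proof.
move=> mE LE; split.
  have := measurable_kernel (tau a) E mE measurableT [set c]
    (measurable_realfun.emeasurable_set1 c).
  by rewrite setTI.
by move=> x y /= <- hxy; rewrite (hxy a E LE).
Qed.

(* States related by R^T(Lam) cannot be separated by an R^T(Lam)-closed set,
   since R^T(Lam) is symmetric. *)
Lemma RelT_RelOf_Gop {Lam : set (set S)} {s t : S} :
  RelT tau Lam s t -> RelOf (Gop tau Lam) s t.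
Proof.
move=> hst A [_ cA]; split=> [As|At]; first exact: (cA s).
by apply: (cA t) => // a E LE; rewrite (hst a E LE).
Qed.

(* Conversely, the level sets separate states with different transition
   probabilities to a measurable member of Lam; so R(G(Lam)) = R^T(Lam). *)
Lemma RelOf_Gop_RelT {Lam : set (set S)} {s t : S} :
  Lam `<=` measurable -> RelOf (Gop tau Lam) s t -> RelT tau Lam s t.
Proof.
move=> Lm hst a E LE.
have [+ _] := hst _ (level_set_Gop a (tau a s E) (Lm E LE) LE).
by move/(_ erefl).
Qed.

(* The invariant satisfied by every stage of the iteration. *)
Definition adequate (Lam : set (set S)) :=
  [/\ Lam `<=` measurable, Lam setT, setI_closed Lam &
      forall s t, RelT tau Lam s t -> RelOf Lam s t].

Lemma adequate_sub_Gop {Lam : set (set S)} :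
  adequate Lam -> Lam `<=` Gop tau Lam.
Proof.
move=> [Lm _ _ LR] A LA; split; first exact: Lm.
by move=> x y Ax hxy; exact: (LR x y hxy A LA).1.
Qed.

Lemma adequate_Gop {Lam : set (set S)} : adequate Lam -> adequate (Gop tau Lam).
Proof.
move=> adL; split.
- by move=> A [].
- by split.
- move=> A B [mA cA] [mB cB]; split; first exact: measurableI.
  by move=> x y [Ax Bx] hxy; split; [exact: (cA x)|exact: (cB x)].
- move=> s t /(RelT_antitone (adequate_sub_Gop adL)).
  exact: RelT_RelOf_Gop.
Qed.

Lemma adequate_sigma_bigcup (J : Type) (P : set J) (F : J -> set (set S)) :
  (forall j, P j -> adequate (F j)) -> adequate <<s \bigcup_(j in P) F j >>.
Proof.
move=> adF; set U := \bigcup_(j in P) F j.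
have [sT _ _ sI] := (sigma_algebraP (C := <<s U >>) (fun _ _ => @subsetT _ _)).1
  (smallest_sigma_algebra setT U).
split=> //.
- apply: smallest_sub; first exact: sigma_algebra_measurable.
  by move=> A [j Pj FA]; have [Fm _ _ _] := adF j Pj; exact: Fm.
- move=> s t hst; apply: RelOf_sigma => A [j Pj FA].
  have [_ _ _ FR] := adF j Pj; apply: FR => //.
  apply: RelT_antitone hst => B FB; apply: sub_sigma_algebra; by exists j.
Qed.

End LMPOperators.

Section WellOrders.
Context {I : Type} {lt : I -> I -> Prop} (hwo : is_wellorder lt).

Lemma wf_min (P : I -> Prop) :
  (exists x, P x) -> exists x, P x /\ forall y, P y -> ~ lt y x.
Proof.
have [_ [_ [_ wf]]] := hwo.
move=> [x Px]; apply: NNPP => hn; move: Px.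
elim/(well_founded_ind wf): x => x IH Px.
by apply: hn; exists x; split => // y Py lyx; exact: (IH y lyx Py).
Qed.

Lemma ordinal_cases (i : I) :
  is_zero lt i \/ (exists j, is_succ_of lt j i) \/ is_limit lt i.
Proof.
case: (classic (is_zero lt i)) => [|nz]; first by left.
case: (classic (exists j, is_succ_of lt j i)) => [|ns]; first by right; left.
by right; right; split.
Qed.

Lemma limit_nonempty (lam : I) : is_limit lt lam -> exists j, lt j lam.
Proof.
move=> [nz _]; apply: NNPP => hn; apply: nz => j ljl; apply: hn; by exists j.
Qed.

Lemma succ_below_limit (lam j : I) :
  is_limit lt lam -> lt j lam -> exists b, is_succ_of lt j b /\ lt b lam.
Proof.
have [_ [trans [tri _]]] := hwo.
move=> [_ nsucc] ljl.
have [b [[ljb lbl] minb]] : exists b, (lt j b /\ lt b lam) /\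
    forall y, (lt j y /\ lt y lam) -> ~ lt y b.
  apply: wf_min; apply: NNPP => hn; apply: nsucc; exists j; split => // k ljk.
  case: (tri k lam) => [lkl|[->|]]; [|by left|by right].
  by case: hn; exists k.
exists b; split => //; split => // k ljk.
case: (tri k b) => [lkb|[->|]]; [|by left|by right].
by case: (minb k) => //; split => //; exact: trans lkb lbl.
Qed.

Lemma chain_bigcup_setI_closed (T : Type) (F : I -> set (set T)) (P : set I) :
  (forall j, P j -> setI_closed (F j)) ->
  (forall j k, lt j k -> F j `<=` F k) ->
  setI_closed (\bigcup_(j in P) F j).
Proof.
have [_ [_ [tri _]]] := hwo.
move=> FI Fmono X Y [j Pj FX] [k Pk FY].
case: (tri j k) => [ljk|[ejk|lkj]].
- by exists k => //; apply: FI => //; exact: Fmono ljk _ FX.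
- by subst k; exists j => //; exact: FI.
- by exists j => //; apply: FI => //; exact: Fmono lkj _ FY.
Qed.

End WellOrders.

Lemma iterates_adequate d (S : measurableType d) (R : realType) (L : countType)
    (tau : L -> R.-spker S ~> S) (Sigma0 : set (set S))
    (I : Type) (lt : I -> I -> Prop) (F : I -> set (set S)) :
  adequate tau Sigma0 -> is_wellorder lt -> sigma_iterates tau Sigma0 lt F ->
  forall k, adequate tau (F k) /\ (forall j, lt j k -> F j `<=` F k).
Proof.
move=> ad0 hwo [hz [hs hl]]; have [irr [trans [tri wf]]] := hwo.
elim/(well_founded_ind wf) => k IH.
case: (ordinal_cases (lt := lt) k) => [kz|[[m hm]|kl]].
- by rewrite (hz k kz); split=> // j /kz.
- have [adm mmono] := IH m hm.1.
  rewrite (hs m k hm); split; first exact: adequate_Gop.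
  move=> j ljk; apply: subset_trans (adequate_sub_Gop adm).
  case: (tri j m) => [ljm|[->//|lmj]]; first exact: mmono.
  case: (hm.2 j lmj) => [ejk|lkj]; first by subst j; case: (irr k).
  by case: (irr k); exact: trans lkj ljk.
- rewrite (hl k kl); split.
    by apply: adequate_sigma_bigcup => j /IH [].
  by move=> j ljk A FjA; apply: sub_sigma_algebra; exists j.
Qed.

Theorem corollary3p10 (d : measure_display) (S : measurableType d)
  (R : realType) (L : countType) (tau : L -> R.-spker S ~> S)
  (Sigma0 : set (set S))
  (hsig0 : sigma_algebra setT Sigma0)
  (hsub0 : Sigma0 `<=` measurable)
  (hR0 : forall s t, RelOf Sigma0 s t <-> RelT tau Sigma0 s t)
  (I : Type) (lt : I -> I -> Prop) (hwo : is_wellorder lt)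
  (F : I -> set (set S)) (hF : sigma_iterates tau Sigma0 lt F)
  (lam : I) (hlam : is_limit lt lam)
  (hfix : SigmaR (RelOf (F lam)) = F lam) :
  state_bisimulation tau (RelOf (F lam)).
Proof.
have ad0 : adequate tau Sigma0.
  have [sT _ _ sI] := (sigma_algebraP (fun _ _ => @subsetT _ _)).1 hsig0.
  by split=> // s t /hR0.
have adF := iterates_adequate ad0 hwo hF.
set U := \bigcup_(j in [set j | lt j lam]) F j.
have FU : F lam = <<s U >> by have [_ [_ hl]] := hF; exact: hl.
have Um : U `<=` measurable.
  by move=> A [j _ FjA]; have [[Fjm _ _ _] _] := adF j; exact: Fjm.
have UI : setI_closed U.
  apply: (chain_bigcup_setI_closed hwo) => [j _|j k ljk].
  - by have [[_ _ FjI _] _] := adF j.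
  - by have [_ mono] := adF k; exact: mono.
have UT : U setT.
  have [j ljl] := limit_nonempty hlam.
  by exists j => //; have [[_ FjT _ _] _] := adF j.
split=> [s t hst A FA|s t hst C]; first by split=> h; apply/(hst A FA).
rewrite hfix FU => FC a.
have agreeU : forall E, U E -> tau a s E = tau a t E.
  move=> E [j ljl FjE].
  have [b [hb lbl]] := succ_below_limit hwo hlam ljl.
  have Fb : F b = Gop tau (F j) by have [_ [hs _]] := hF; exact: hs.
  have [[Fjm _ _ _] _] := adF j.
  apply: (RelOf_Gop_RelT Fjm) FjE; rewrite -Fb.
  exact: RelOf_antitone ((adF lam).2 b lbl) hst.
apply: (finite_measure_unique Um UI (agreeU _ UT) _ agreeU) FC.
exact: (Order.POrderTheory.le_lt_trans (sprob_kernel_le1 (tau a) s) (ltey _)).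
Qed.
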